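(* Let $G\subset\mathbb{R}^n$ be a domain and let $f\colon G\to\mathbb{R}^n$ be a discrete $L$-LQ-mapping, meaning that $B(f(x),L^{-1}r)\subset f(B(x,r))\subset B(f(x),Lr)$ holds for all balls $B(x,r)\subset G$. Then $f$ is an $L$-BLD-mapping.
   Context: A map $f$ is $L$-BLD ($L\ge1$) if it is continuous, open and discrete and for every path $\beta$ in its domain $L^{-1}\ell(\beta)\le\ell(f\circ\beta)\le L\ell(\beta)$, where $\ell$ denotes length. *)

From Stdlib Require Import Reals Lra List Sorting.Sorted.
From Stdlib Require Fin.
Open Scope R_scope.

Definition Rn (n : nat) : Type := Fin.t n -> R.

Fixpoint fsum (n : nat) : (Fin.t n -> R) -> R :=
  match n return (Fin.t n -> R) -> R with
  | O => fun _ => 0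
  | S m => fun g => g Fin.F1 + fsum m (fun i => g (Fin.FS i))
  end.

Definition dist {n : nat} (x y : Rn n) : R :=
  sqrt (fsum n (fun i => (x i - y i) ^ 2)).

Definition ball {n : nat} (x : Rn n) (r : R) : Rn n -> Prop :=
  fun y => dist x y < r.

Definition subset {n : nat} (A B : Rn n -> Prop) : Prop := forall y, A y -> B y.

Definition is_open {n : nat} (U : Rn n -> Prop) : Prop :=
  forall x, U x -> exists r, 0 < r /\ subset (ball x r) U.

Definition is_connected {n : nat} (G : Rn n -> Prop) : Prop :=
  forall U V : Rn n -> Prop, is_open U -> is_open V ->
    (forall x, G x -> U x \/ V x) ->
    (exists x, G x /\ U x) -> (exists x, G x /\ V x) ->
    exists x, G x /\ U x /\ V x.

Definition domain {n : nat} (G : Rn n -> Prop) : Prop :=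
  (exists x, G x) /\ is_open G /\ is_connected G.

Definition image {n : nat} (f : Rn n -> Rn n) (A : Rn n -> Prop) : Rn n -> Prop :=
  fun z => exists y, A y /\ f y = z.

(** Properties of a map f : G -> R^n (represented by a total function whose
    values outside G are irrelevant). *)
Definition continuous_on {n : nat} (G : Rn n -> Prop) (f : Rn n -> Rn n) : Prop :=
  forall x, G x -> forall eps, 0 < eps -> exists delta, 0 < delta /\
    forall y, G y -> dist x y < delta -> dist (f x) (f y) < eps.

Definition open_map_on {n : nat} (G : Rn n -> Prop) (f : Rn n -> Rn n) : Prop :=
  forall U, is_open U -> subset U G -> is_open (image f U).

Definition discrete_on {n : nat} (G : Rn n -> Prop) (f : Rn n -> Rn n) : Prop :=
  forall x, G x -> exists delta, 0 < delta /\
    forall y, G y -> dist x y < delta -> f y = f x -> y = x.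

Definition LQ_on {n : nat} (L : R) (G : Rn n -> Prop) (f : Rn n -> Rn n) : Prop :=
  forall x r, 0 < r -> subset (ball x r) G ->
    subset (ball (f x) (r / L)) (image f (ball x r)) /\
    subset (image f (ball x r)) (ball (f x) (L * r)).

Definition path_in {n : nat} (G : Rn n -> Prop) (beta : R -> Rn n) (a b : R) : Prop :=
  a <= b /\
  (forall t, a <= t <= b -> G (beta t)) /\
  (forall t, a <= t <= b -> forall eps, 0 < eps -> exists delta, 0 < delta /\
     forall s, a <= s <= b -> Rabs (s - t) < delta -> dist (beta t) (beta s) < eps).

Fixpoint poly_sum {n : nat} (beta : R -> Rn n) (ts : list R) : R :=
  match ts with
  | t :: ((s :: _) as rest) => dist (beta t) (beta s) + poly_sum beta rest
  | _ => 0
  end.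

(** [length_le beta a b M] : the length ell(beta) of beta on [a,b]
    (supremum of inscribed polygonal sums over partitions; possibly +oo)
    satisfies ell(beta) <= M. *)
Definition length_le {n : nat} (beta : R -> Rn n) (a b M : R) : Prop :=
  forall ts : list R, Sorted Rle ts -> Forall (fun t => a <= t <= b) ts ->
    poly_sum beta ts <= M.

(** [ell(beta1) <= c * ell(beta2)] in [0,+oo], c > 0: every real upper bound M
    for ell(beta2) gives the upper bound c*M for ell(beta1). *)
Definition length_le_scaled {n : nat} (beta1 beta2 : R -> Rn n) (a b c : R) : Prop :=
  forall M, length_le beta2 a b M -> length_le beta1 a b (c * M).

Definition BLD_on {n : nat} (L : R) (G : Rn n -> Prop) (f : Rn n -> Rn n) : Prop :=
  continuous_on G f /\ open_map_on G f /\ discrete_on G f /\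
  forall beta a b, path_in G beta a b ->
    length_le_scaled beta (fun t => f (beta t)) a b L /\
    length_le_scaled (fun t => f (beta t)) beta a b L.

(* The outer LQ inclusion f(B(x,r)) ⊂ B(f x, L r) makes f locally L-Lipschitz
   at every point, and the inner one B(f y, r/L) ⊂ f(B(y,r)), combined with
   discreteness, makes f locally L-co-Lipschitz: |y - z| <= L |f y - f z| near y.
   Along a path beta each polygonal sum of f ∘ beta (resp. beta) is then bounded
   by L times a polygonal sum of beta (resp. f ∘ beta) over a refined partition,
   which is built by induction along the parameter interval. *)
From Pilot Require Import Defs.
From Stdlib Require Import Reals Lra List Sorting.Sorted Classical.
Open Scope R_scope.
Local Notation dist := Defs.dist.

Lemma fsum_ext n : forall g h : Fin.t n -> R, (forall i, g i = h i) -> fsum n g = fsum n h.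
Proof.
  induction n as [|n IH]; intros g h E; simpl; [reflexivity|].
  rewrite E, (IH _ (fun i => h (Fin.FS i))); auto.
Qed.

Lemma fsum_plus n : forall g h : Fin.t n -> R,
  fsum n (fun i => g i + h i) = fsum n g + fsum n h.
Proof.
  induction n as [|n IH]; intros g h; simpl; [ring|].
  rewrite (IH (fun i => g (Fin.FS i))); ring.
Qed.

Lemma fsum_scal n : forall (c : R) (g : Fin.t n -> R),
  fsum n (fun i => c * g i) = c * fsum n g.
Proof.
  induction n as [|n IH]; intros c g; simpl; [ring|].
  rewrite (IH c (fun i => g (Fin.FS i))); ring.
Qed.

Lemma fsum_nonneg n : forall g : Fin.t n -> R, (forall i, 0 <= g i) -> 0 <= fsum n g.
Proof.
  induction n as [|n IH]; intros g Hg; simpl; [lra|].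
  pose proof (Hg Fin.F1); pose proof (IH (fun i => g (Fin.FS i)) (fun i => Hg _)); lra.
Qed.

Lemma fsum_sqr_nonneg n (g : Fin.t n -> R) : 0 <= fsum n (fun i => g i ^ 2).
Proof. apply fsum_nonneg; intro; apply pow2_ge_0. Qed.

Lemma dist_sym {n} (x y : Rn n) : dist x y = dist y x.
Proof. unfold Defs.dist; f_equal; apply fsum_ext; intro; ring. Qed.

Lemma dist_refl {n} (x : Rn n) : dist x x = 0.
Proof.
  unfold Defs.dist; rewrite (fsum_ext _ _ (fun i => 0 * 0)), fsum_scal by (intro; ring).
  rewrite Rmult_0_l; apply sqrt_0.
Qed.

Lemma dist_nonneg {n} (x y : Rn n) : 0 <= dist x y.
Proof. apply sqrt_pos. Qed.

Lemma nonneg_quadratic_discriminant P Q S :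
  0 <= P -> 0 <= S -> (forall l, 0 <= P + 2 * l * Q + l * l * S) -> Q * Q <= P * S.
Proof.
  intros HP HS Hq.
  destruct (Rle_lt_or_eq_dec 0 S HS) as [Spos|<-].
  - pose proof (Hq (- Q / S)) as H.
    replace (P + 2 * (- Q / S) * Q + - Q / S * (- Q / S) * S) with ((P * S - Q * Q) / S)
      in H by (field; lra).
    apply (Rmult_le_compat_r S) in H; [|lra].
    unfold Rdiv in H; rewrite Rmult_assoc, Rinv_l in H; lra.
  - destruct (Req_dec Q 0) as [->|Qnz]; [lra|].
    pose proof (Hq (- (P + 1) / (2 * Q))) as H.
    replace (P + 2 * (- (P + 1) / (2 * Q)) * Q + - (P + 1) / (2 * Q) * (- (P + 1) / (2 * Q)) * 0)
      with (-1) in H by (field; auto).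
    lra.
Qed.

Lemma cauchy_schwarz n (u v : Fin.t n -> R) :
  fsum n (fun i => u i * v i) <=
  sqrt (fsum n (fun i => u i ^ 2)) * sqrt (fsum n (fun i => v i ^ 2)).
Proof.
  set (P := fsum n (fun i => u i ^ 2)); set (Q := fsum n (fun i => u i * v i));
  set (S := fsum n (fun i => v i ^ 2)).
  assert (HP : 0 <= P) by apply fsum_sqr_nonneg.
  assert (HS : 0 <= S) by apply fsum_sqr_nonneg.
  assert (HQ : Q * Q <= P * S).
  { apply nonneg_quadratic_discriminant; auto; intro l.
    replace (P + 2 * l * Q + l * l * S) with (fsum n (fun i => (u i + l * v i) ^ 2));
      [apply fsum_sqr_nonneg|].
    rewrite (fsum_ext _ _ (fun i => u i ^ 2 + ((2 * l) * (u i * v i) + (l * l) * v i ^ 2)))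
      by (intro; ring).
    rewrite !fsum_plus, !fsum_scal; unfold P, Q, S; ring. }
  destruct (Rle_or_lt Q 0).
  - pose proof (sqrt_pos P); pose proof (sqrt_pos S); nra.
  - rewrite <- sqrt_mult, <- (sqrt_square Q) by lra; apply sqrt_le_1_alt; lra.
Qed.

Lemma dist_triangle {n} (x y z : Rn n) : dist x z <= dist x y + dist y z.
Proof.
  set (u := fun i => x i - y i); set (v := fun i => y i - z i).
  change (sqrt (fsum n (fun i => (x i - z i) ^ 2)) <=
          sqrt (fsum n (fun i => u i ^ 2)) + sqrt (fsum n (fun i => v i ^ 2))).
  replace (fsum n (fun i => (x i - z i) ^ 2)) with
    (fsum n (fun i => u i ^ 2) + 2 * fsum n (fun i => u i * v i) + fsum n (fun i => v i ^ 2))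
    by (rewrite <- fsum_scal, <- !fsum_plus; apply fsum_ext; intro; unfold u, v; ring).
  pose proof (cauchy_schwarz n u v).
  pose proof (sqrt_sqrt _ (fsum_sqr_nonneg n u)); pose proof (sqrt_pos (fsum n (fun i => u i ^ 2))).
  pose proof (sqrt_sqrt _ (fsum_sqr_nonneg n v)); pose proof (sqrt_pos (fsum n (fun i => v i ^ 2))).
  rewrite <- (sqrt_square (sqrt (fsum n (fun i => u i ^ 2)) + sqrt (fsum n (fun i => v i ^ 2))))
    by lra.
  apply sqrt_le_1_alt; nra.
Qed.

Lemma real_induction (t b : R) (P : R -> Prop) :
  t <= b -> P t ->
  (forall m, t <= m <= b -> exists d, 0 < d /\
     forall u, t <= u <= b -> Rabs (u - m) < d ->
       (u <= m -> P u -> P m) /\ (m <= u -> P m -> P u)) ->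
  forall s, t <= s <= b -> P s.
Proof.
  intros Htb Pt Hstep.
  set (E := fun s => t <= s <= b /\ forall s', t <= s' <= s -> P s').
  assert (Et : E t) by (split; [lra|]; intros s' Hs'; replace s' with t by lra; exact Pt).
  assert (Ebound : bound E) by (exists b; intros s [Hs _]; lra).
  destruct (completeness E Ebound (ex_intro _ t Et)) as [m [Hub Hlub]].
  assert (Htm : t <= m) by (apply Hub; exact Et).
  assert (Hmb : m <= b) by (apply Hlub; intros s [Hs _]; lra).
  assert (Hbelow : forall s, t <= s < m -> P s).
  { intros s Hs; destruct (classic (P s)) as [|Hn]; [assumption|exfalso].
    enough (m <= s) by lra.
    apply Hlub; intros e [He HPe]; destruct (Rle_dec e s) as [|]; [assumption|].
    exfalso; apply Hn, HPe; lra. }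
  destruct (Hstep m (conj Htm Hmb)) as [d [Hd Hm]].
  assert (Pm : P m).
  { destruct (Req_dec t m) as [<-|]; [exact Pt|].
    set (u := Rmax t (m - d / 2)).
    assert (Hu : t <= u < m) by (unfold u, Rmax; destruct Rle_dec; lra).
    apply (Hm u); [lra| |lra|apply Hbelow; lra].
    unfold u, Rmax; destruct Rle_dec; rewrite Rabs_left; lra. }
  assert (Em : E m).
  { split; [lra|]; intros s Hs.
    destruct (Req_dec s m) as [->|]; [exact Pm|apply Hbelow; lra]. }
  destruct (Req_dec m b) as [<-|]; [intros s Hs; apply Em; exact Hs|].
  exfalso.
  set (v := Rmin b (m + d / 2)).
  assert (Hv : m < v <= b) by (unfold v, Rmin; destruct Rle_dec; lra).
  enough (E v) by (assert (v <= m) by (apply Hub; auto); lra).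
  split; [lra|]; intros s Hs.
  destruct (Rle_dec s m); [apply Em; lra|].
  apply (Hm s); [lra| |lra|exact Pm].
  rewrite Rabs_right by lra; unfold v, Rmin in *; destruct Rle_dec; lra.
Qed.

Section Chains.
Variable n : nat.
Variable eta : R -> Rn n.
Variables a b : R.

(* [chain t s S]: a partition t = t_0 <= ... <= t_k = s of a subinterval of [a,b]
   whose inscribed polygonal sum for eta is S. *)
Inductive chain : R -> R -> R -> Prop :=
| chain_nil s : a <= s <= b -> chain s s 0
| chain_cons t u s S : t <= u -> a <= t <= b -> chain u s S ->
    chain t s (dist (eta t) (eta u) + S).

Lemma chain_end t s S : chain t s S -> a <= s <= b.
Proof. induction 1; assumption. Qed.

Lemma chain_app t u s S S' : chain t u S -> chain u s S' -> chain t s (S + S').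
Proof.
  induction 1 as [|t u' u S Htu Ht _ IH]; intros Hc.
  - now rewrite Rplus_0_l.
  - rewrite Rplus_assoc; constructor; auto.
Qed.

Lemma chain_poly_sum t s S : chain t s S ->
  exists l, Sorted Rle (t :: l) /\ Forall (fun x => a <= x <= b) (t :: l) /\
            poly_sum eta (t :: l) = S.
Proof.
  induction 1 as [s Hs|t u s S Htu Ht _ [l [Hsort [Hin Hsum]]]].
  - exists nil; split; [|split]; [apply Sorted_cons; constructor|constructor; auto|reflexivity].
  - exists (u :: l); repeat split.
    + constructor; [exact Hsort|constructor; exact Htu].
    + constructor; assumption.
    + simpl; simpl in Hsum; rewrite Hsum; reflexivity.
Qed.

Lemma chain_le_length M t s S : length_le eta a b M -> chain t s S -> S <= M.
Proof.
  intros HM Hc; destruct (chain_poly_sum _ _ _ Hc) as [l [Hsort [Hin <-]]].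
  exact (HM _ Hsort Hin).
Qed.

Variable gam : R -> Rn n.
Variable L : R.
Hypothesis L_ge0 : 0 <= L.
Hypothesis gam_dominated : forall u, a <= u <= b -> exists d, 0 < d /\
  forall v, a <= v <= b -> Rabs (v - u) < d ->
    dist (gam u) (gam v) <= L * dist (eta u) (eta v).

Definition chain_dominated t s := exists S, chain t s S /\ dist (gam t) (gam s) <= L * S.

Lemma chain_dominated_extend t u v : chain_dominated t u -> u <= v -> a <= v <= b ->
  dist (gam u) (gam v) <= L * dist (eta u) (eta v) -> chain_dominated t v.
Proof.
  intros [S [Hc Hd]] Huv Hv Hloc.
  pose proof (chain_end _ _ _ Hc) as Hu.
  exists (S + (dist (eta u) (eta v) + 0)); split.
  - apply chain_app with u; [exact Hc|constructor; auto; constructor; exact Hv].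
  - pose proof (dist_triangle (gam t) (gam u) (gam v)); nra.
Qed.

Lemma chain_dominated_all t s : a <= t -> t <= s <= b -> chain_dominated t s.
Proof.
  intros Hat Hts.
  apply (real_induction t b (chain_dominated t)); [lra| | |lra].
  - exists 0; split; [constructor; lra|rewrite dist_refl; lra].
  - intros m Hm; destruct (gam_dominated m) as [d [Hd Hloc]]; [lra|].
    exists d; split; [exact Hd|]; intros u Hu Hum; split; intros Hle Hdom.
    + apply chain_dominated_extend with u; [exact Hdom|exact Hle|lra|].
      rewrite (dist_sym (gam u)), (dist_sym (eta u)); apply Hloc; lra.
    + apply chain_dominated_extend with m; [exact Hdom|exact Hle|lra|].
      apply Hloc; [lra|exact Hum].
Qed.

Lemma poly_sum_dominated ts : forall t, Sorted Rle (t :: ts) ->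
  Forall (fun x => a <= x <= b) (t :: ts) ->
  exists s S, chain t s S /\ poly_sum gam (t :: ts) <= L * S.
Proof.
  induction ts as [|u ts IH]; intros t Hsort Hin.
  - inversion Hin; subst; exists t, 0; split; [constructor; assumption|simpl; lra].
  - apply Sorted_inv in Hsort as [Hsort Hhd]; apply HdRel_inv in Hhd.
    inversion Hin as [|? ? Ht Hin']; subst; inversion Hin' as [|? ? Hu _]; subst.
    destruct (IH u Hsort Hin') as [s [S [Hc Hsum]]].
    destruct (chain_dominated_all t u (proj1 Ht) (conj Hhd (proj2 Hu))) as [S1 [Hc1 Hd1]].
    exists s, (S1 + S); split; [exact (chain_app _ _ _ _ _ Hc1 Hc)|].
    change (poly_sum gam (t :: u :: ts)) with (dist (gam t) (gam u) + poly_sum gam (u :: ts)).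
    lra.
Qed.

Lemma length_le_dominated M : length_le eta a b M -> length_le gam a b (L * M).
Proof.
  intros HM [|t ts] Hsort Hin.
  - assert (0 <= M) by (apply (HM nil); constructor).
    simpl; nra.
  - destruct (poly_sum_dominated ts t Hsort Hin) as [s [S [Hc Hsum]]].
    pose proof (chain_le_length _ _ _ _ HM Hc); nra.
Qed.

End Chains.

Definition locally_dominated {n} (L : R) (G : Rn n -> Prop) (g h : Rn n -> Rn n) : Prop :=
  forall x, G x -> exists r, 0 < r /\
    forall z, dist x z < r -> dist (g x) (g z) <= L * dist (h x) (h z).

Lemma path_length_dominated {n} L (G : Rn n -> Prop) (g h : Rn n -> Rn n) beta a b :
  0 <= L -> locally_dominated L G g h -> path_in G beta a b ->
  length_le_scaled (fun t => g (beta t)) (fun t => h (beta t)) a b L.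
Proof.
  intros HL Hdom [_ [HG Hcont]] M HM.
  apply (length_le_dominated n (fun t => h (beta t)) a b (fun t => g (beta t)) L HL);
    [|exact HM].
  intros u Hu; destruct (Hdom _ (HG u Hu)) as [r [Hr Hr']].
  destruct (Hcont u Hu r Hr) as [d [Hd Hd']].
  exists d; split; [exact Hd|]; intros v Hv Hvu; apply Hr', Hd'; assumption.
Qed.

Section LQ.
Variables (n : nat) (L : R) (G : Rn n -> Prop) (f : Rn n -> Rn n).
Hypothesis L_ge1 : 1 <= L.
Hypothesis G_open : is_open G.
Hypothesis f_LQ : LQ_on L G f.

Lemma LQ_locally_lipschitz : locally_dominated L G f (fun x => x).
Proof.
  intros x Gx; destruct (G_open x Gx) as [R [HR HRG]].
  exists R; split; [exact HR|]; intros z Hz.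
  apply le_epsilon; intros eps Heps.
  set (s := Rmin R (dist x z + eps / L)).
  assert (HsR : s <= R) by apply Rmin_l.
  assert (Hzs : dist x z < s).
  { apply Rmin_glb_lt; [exact Hz|].
    enough (0 < eps / L) by lra; apply Rdiv_lt_0_compat; lra. }
  assert (HLs : L * s <= L * dist x z + eps).
  { replace (L * dist x z + eps) with (L * (dist x z + eps / L)) by (field; lra).
    apply Rmult_le_compat_l; [lra|apply Rmin_r]. }
  destruct (f_LQ x s) as [_ Hout].
  - pose proof (dist_nonneg x z); lra.
  - intros y Hy; apply HRG; unfold ball in *; lra.
  - enough (dist (f x) (f z) < L * s) by lra.
    apply Hout; exists z; split; [exact Hzs|reflexivity].
Qed.

(* If |y - z| = r > L |f y - f z|, then f y ∈ B(f z, r/L) ⊂ f(B(z,r)), so f y = f w with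
   w ≠ y (as |z - w| < r) close to y, contradicting discreteness at y. *)
Lemma LQ_locally_colipschitz : discrete_on G f -> locally_dominated L G (fun x => x) f.
Proof.
  intros f_discrete y Gy.
  destruct (G_open y Gy) as [R [HR HRG]]; destruct (f_discrete y Gy) as [d [Hd Hinj]].
  exists (Rmin R d / 2); split; [unfold Rmin; destruct Rle_dec; lra|].
  intros z Hz; pose proof (Rmin_l R d); pose proof (Rmin_r R d).
  destruct (Rle_dec (dist y z) (L * dist (f y) (f z))) as [|Hfar]; [assumption|exfalso].
  pose proof (dist_nonneg (f y) (f z)).
  assert (Hr : 0 < dist y z) by nra.
  destruct (f_LQ z (dist y z) Hr) as [Hin _].
  { intros w Hw; apply HRG; unfold ball in *; pose proof (dist_triangle y z w); lra. }
  assert (Hfy : ball (f z) (dist y z / L) (f y)).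
  { unfold ball; rewrite dist_sym; apply (Rmult_lt_reg_l L); [lra|].
    replace (L * (dist y z / L)) with (dist y z) by (field; lra); lra. }
  destruct (Hin _ Hfy) as [w [Hw Hfw]]; unfold ball in Hw.
  pose proof (dist_triangle y z w).
  assert (Hwy : w = y) by (apply Hinj; [apply HRG; unfold ball; lra|lra|exact Hfw]).
  subst w; rewrite dist_sym in Hw; lra.
Qed.

Lemma LQ_open_map : open_map_on G f.
Proof.
  intros U HU HUG _ [y [Uy <-]].
  destruct (HU y Uy) as [r [Hr HrU]].
  exists (r / L); split; [apply Rdiv_lt_0_compat; lra|].
  intros w Hw; destruct (f_LQ y r Hr) as [Hin _]; [intros v Hv; apply HUG, HrU, Hv|].
  destruct (Hin w Hw) as [v [Hv <-]]; exists v; split; [apply HrU, Hv|reflexivity].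
Qed.

End LQ.

Lemma locally_lipschitz_continuous {n} L (G : Rn n -> Prop) (f : Rn n -> Rn n) :
  0 < L -> locally_dominated L G f (fun x => x) -> continuous_on G f.
Proof.
  intros HL Hlip x Gx eps Heps; destruct (Hlip x Gx) as [r [Hr Hr']].
  assert (Heps' : 0 < eps / L) by (apply Rdiv_lt_0_compat; assumption).
  exists (Rmin r (eps / L)); split; [apply Rmin_glb_lt; assumption|].
  intros y _ Hy; pose proof (Rmin_l r (eps / L)); pose proof (Rmin_r r (eps / L)).
  pose proof (Hr' y ltac:(lra)) as Hfy; simpl in Hfy.
  replace eps with (L * (eps / L)) by (field; lra).
  pose proof (dist_nonneg x y).
  apply Rle_lt_trans with (L * dist x y); [exact Hfy|apply Rmult_lt_compat_l; lra].
Qed.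

Theorem lemma3p1 (n : nat) (L : R) (G : Rn n -> Prop) (f : Rn n -> Rn n) :
  1 <= L -> domain G -> discrete_on G f -> LQ_on L G f -> BLD_on L G f.
Proof.
  intros HL [_ [G_open _]] f_discrete f_LQ.
  pose proof (LQ_locally_lipschitz n L G f HL G_open f_LQ) as f_lip.
  pose proof (LQ_locally_colipschitz n L G f HL G_open f_LQ f_discrete) as f_colip.
  split; [|split; [|split]].
  - apply (locally_lipschitz_continuous L); [lra|exact f_lip].
  - exact (LQ_open_map n L G f HL f_LQ).
  - exact f_discrete.
  - intros gamma a b Hgamma; split.
    + exact (path_length_dominated L G (fun x => x) f gamma a b ltac:(lra) f_colip Hgamma).
    + exact (path_length_dominated L G f (fun x => x) gamma a b ltac:(lra) f_lip Hgamma).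
Qed.
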